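(* Let $\mathcal C=(A,\bar A,B,\bar B,C,\bar C,D,\bar D,E,\bar E,F,\bar F)$ be a coefficient tuple and $\mathcal W=(Q,\bar Q,S,\bar S,R,\bar R,G,\bar G)$ a weight tuple. For any $H,K\in\Phi$, the existence and uniqueness of solutions of the Riccati systems $\mathrm{Ric}(\mathcal C,\mathcal W^{HK})$ are equivalent; in particular, for every $H,K\in\Phi$, $\mathrm{Ric}(\mathcal C,\mathcal W^{HK})$ admits a solution if and only if $\mathrm{Ric}(\mathcal C,\mathcal W)$ admits a solution, and its solution is unique if and only if the solution of $\mathrm{Ric}(\mathcal C,\mathcal W)$ is unique.
   Context: Fix $T>0$, integers $n,m\ge1$, a nonempty $\Theta\subseteq\mathbb R\setminus\{0\}$ and a $\sigma$-finite measure $\nu$ on $\Theta$ with $\int_\Theta(1\wedge\theta^2)\nu(d\theta)<\infty$. $\mathbb S^k$: symmetric $k\times k$ matrices. $L^\infty(0,T;M)$: bounded functions; $L^2_\nu(M)$: deterministic $r:[0,T]\times\Theta\to M$ with $\sup_t\int_\Theta|r(t,\theta)|^2\nu(d\theta)<\infty$. A coefficient tuple $\mathcal C=(A,\bar A,B,\bar B,C,\bar C,D,\bar D,E,\bar E,F,\bar F)$: deterministic $A,\bar A,C,\bar C\in L^\infty(0,T;\mathbb R^{n\times n})$, $B,\bar B,D,\bar D\in L^\infty(0,T;\mathbb R^{n\times m})$, $E,\bar E\in L^2_\nu(\mathbb R^{n\times n})$, $F,\bar F\in L^2_\nu(\mathbb R^{n\times m})$. A weight tuple $\mathcal W=(Q,\bar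 Q,S,\bar S,R,\bar R,G,\bar G)$: $Q,\bar Q\in L^\infty(0,T;\mathbb S^n)$, $R,\bar R\in L^\infty(0,T;\mathbb S^m)$, $S,\bar S\in L^\infty(0,T;\mathbb R^{n\times m})$, $G,\bar G\in\mathbb S^n$. Riccati system $\mathrm{Ric}(\mathcal C,\mathcal W)$: for deterministic $P,\Pi:[0,T]\to\mathbb S^n$, with $\Sigma_{0t}=R_t+D_t^\top P_tD_t+\int_\Theta F_{t,\theta}^\top P_tF_{t,\theta}\nu(d\theta)$, $\Sigma_{1t}=R_t+\bar R_t+(D_t+\bar D_t)^\top P_t(D_t+\bar D_t)+\int_\Theta(F_{t,\theta}+\bar F_{t,\theta})^\top P_t(F_{t,\theta}+\bar F_{t,\theta})\nu(d\theta)$ (invertible): $\dot P_t+P_tA_t+A_t^\top P_t+C_t^\top P_tC_t+\int_\Theta E_{t,\theta}^\top P_tE_{t,\theta}\nu(d\theta)+Q_t-\big(S_t+P_tB_t+C_t^\top P_tD_t+\int_\Theta E_{t,\theta}^\top P_tF_{t,\theta}\nu(d\theta)\big)\Sigma_{0t}^{-1}\big(S_t^\top+B_t^\top P_t+D_t^\top P_tC_t+\int_\Theta F_{t,\theta}^\top P_tE_{t,\theta}\nu(d\theta)\big)=0$, $P_T=G$; $\dot\Pi_t+\Pi_t(A_t+\bar A_t)+(A_t+\bar A_t)^\top\Pi_t+(C_t+\bar C_t)^\top P_t(C_t+\bar C_t)+\int_\Theta(E_{t,\theta}+\bar E_{t,\theta})^\top P_t(E_{t,\theta}+\bar E_{t,\theta})\nu(d\theta)+Q_t+\bar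 Q_t-\big[(S_t+\bar S_t)+\Pi_t(B_t+\bar B_t)+(C_t+\bar C_t)^\top P_t(D_t+\bar D_t)+\int_\Theta(E_{t,\theta}+\bar E_{t,\theta})^\top P_t(F_{t,\theta}+\bar F_{t,\theta})\nu(d\theta)\big]\Sigma_{1t}^{-1}\big[(S_t+\bar S_t)^\top+(B_t+\bar B_t)^\top\Pi_t+(D_t+\bar D_t)^\top P_t(C_t+\bar C_t)+\int_\Theta(F_{t,\theta}+\bar F_{t,\theta})^\top P_t(E_{t,\theta}+\bar E_{t,\theta})\nu(d\theta)\big]=0$, $\Pi_T=G+\bar G$. (For a weight tuple with components marked $HK$, the same system with each weight replaced accordingly.) $\Phi$ is the set of deterministic continuously differentiable bounded functions $[0,T]\to\mathbb S^n$. For $H,K\in\Phi$, $\mathcal W^{HK}=(Q^{HK},\bar Q^{HK},S^{HK},\bar S^{HK},R^{HK},\bar R^{HK},G^{HK},\bar G^{HK})$ is defined by $Q^{HK}_t=Q_t+\dot H_t+H_tA_t+A_t^\top H_t+C_t^\top H_tC_t+\int_\Theta E_{t,\theta}^\top H_tE_{t,\theta}\nu(d\theta)$, $S^{HK}_t=S_t+H_tB_t+C_t^\top H_tD_t+\int_\Theta E_{t,\theta}^\top H_tF_{t,\theta}\nu(d\theta)$, $R^{HK}_t=R_t+D_t^\top H_tD_t+\int_\Theta F_{t,\theta}^\top H_tF_{t,\theta}\nu(d\theta)$, $G^{HK}=G-H_T$, and $\bar Q^{HK},\bar S^{HK},\bar R^{HK},\bar G^{HK}$ determined by $Q^{HK}_t+\bar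 Q^{HK}_t=Q_t+\bar Q_t+\dot K_t+K_t(A_t+\bar A_t)+(A_t+\bar A_t)^\top K_t+(C_t+\bar C_t)^\top H_t(C_t+\bar C_t)+\int_\Theta(E_{t,\theta}+\bar E_{t,\theta})^\top H_t(E_{t,\theta}+\bar E_{t,\theta})\nu(d\theta)$, $S^{HK}_t+\bar S^{HK}_t=S_t+\bar S_t+K_t(B_t+\bar B_t)+(C_t+\bar C_t)^\top H_t(D_t+\bar D_t)+\int_\Theta(E_{t,\theta}+\bar E_{t,\theta})^\top H_t(F_{t,\theta}+\bar F_{t,\theta})\nu(d\theta)$, $R^{HK}_t+\bar R^{HK}_t=R_t+\bar R_t+(D_t+\bar D_t)^\top H_t(D_t+\bar D_t)+\int_\Theta(F_{t,\theta}+\bar F_{t,\theta})^\top H_t(F_{t,\theta}+\bar F_{t,\theta})\nu(d\theta)$, $G^{HK}+\bar G^{HK}=G+\bar G-K_T$. Note $\mathcal W^{00}=\mathcal W$. *)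

From HB Require Import structures.
From mathcomp Require Import all_boot all_order all_algebra.
From mathcomp Require Import all_classical all_reals all_analysis.
Set Implicit Arguments. Unset Strict Implicit. Unset Printing Implicit Defensive.
Import Order.TTheory GRing.Theory Num.Theory.
Import numFieldNormedType.Exports.
Local Open Scope classical_set_scope.
Local Open Scope ring_scope.

Section Defs.
Variables (R : realType) (n m : nat).

(* Time-dependent coefficients are functions R -> matrix; only their values
   on [0,T] matter.  Jump coefficients are functions of (t, theta). *)
Record coef := Coef {
  cA : R -> 'M[R]_n;  cAb : R -> 'M[R]_n;
  cB : R -> 'M[R]_(n, m); cBb : R -> 'M[R]_(n, m);
  cC : R -> 'M[R]_n;  cCb : R -> 'M[R]_n;
  cD : R -> 'M[R]_(n, m); cDb : R -> 'M[R]_(n, m);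
  cE : R -> R -> 'M[R]_n; cEb : R -> R -> 'M[R]_n;
  cF : R -> R -> 'M[R]_(n, m); cFb : R -> R -> 'M[R]_(n, m) }.

Record weight := Weight {
  wQ : R -> 'M[R]_n; wQb : R -> 'M[R]_n;
  wS : R -> 'M[R]_(n, m); wSb : R -> 'M[R]_(n, m);
  wR : R -> 'M[R]_m; wRb : R -> 'M[R]_m;
  wG : 'M[R]_n; wGb : 'M[R]_n }.

Definition symmetric k (M : 'M[R]_k) := M^T = M.

Definition bounded_on (T : R) p q (f : R -> 'M[R]_(p, q)) :=
  exists M : R, forall t, 0 <= t <= T -> forall i j, `|f t i j| <= M.

Variables (Th : set R) (nu : {measure set R -> \bar R}).

Definition L2nu (T : R) p q (r : R -> R -> 'M[R]_(p, q)) :=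
  (forall t, 0 <= t <= T -> forall i j,
     measurable_fun Th (fun th => r t th i j) /\
     nu.-integrable Th (fun th => ((r t th i j) ^+ 2)%:E)) /\
  exists M : R, forall t, 0 <= t <= T ->
     \int[nu]_(th in Th) (\sum_i \sum_j (r t th i j) ^+ 2) <= M.

Definition mint p q (f : R -> 'M[R]_(p, q)) : 'M[R]_(p, q) :=
  \matrix_(i, j) \int[nu]_(th in Th) f th i j.

Definition coef_ok (T : R) (c : coef) :=
  [/\ bounded_on T (cA c) /\ bounded_on T (cAb c),
      bounded_on T (cB c) /\ bounded_on T (cBb c),
      bounded_on T (cC c) /\ bounded_on T (cCb c),
      bounded_on T (cD c) /\ bounded_on T (cDb c) &
   [/\ L2nu T (cE c), L2nu T (cEb c), L2nu T (cF c) & L2nu T (cFb c)]].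

Definition weight_ok (T : R) (w : weight) :=
  [/\ forall t, 0 <= t <= T ->
        [/\ symmetric (wQ w t), symmetric (wQb w t),
            symmetric (wR w t) & symmetric (wRb w t)],
      bounded_on T (wQ w) /\ bounded_on T (wQb w),
      bounded_on T (wS w) /\ bounded_on T (wSb w),
      bounded_on T (wR w) /\ bounded_on T (wRb w) &
      symmetric (wG w) /\ symmetric (wGb w)].

Definition Sig0 (c : coef) (w : weight) (P : R -> 'M[R]_n) t : 'M[R]_m :=
  wR w t + (cD c t)^T *m P t *m cD c t
  + mint (fun th => (cF c t th)^T *m P t *m cF c t th).

Definition Sig1 (c : coef) (w : weight) (P : R -> 'M[R]_n) t : 'M[R]_m :=
  wR w t + wRb w t
  + (cD c t + cDb c t)^T *m P t *m (cD c t + cDb c t)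
  + mint (fun th => (cF c t th + cFb c t th)^T *m P t *m (cF c t th + cFb c t th)).

Definition RicP_rhs (c : coef) (w : weight) (P : R -> 'M[R]_n) t : 'M[R]_n :=
  let L := wS w t + P t *m cB c t + (cC c t)^T *m P t *m cD c t
           + mint (fun th => (cE c t th)^T *m P t *m cF c t th) in
  P t *m cA c t + (cA c t)^T *m P t + (cC c t)^T *m P t *m cC c t
  + mint (fun th => (cE c t th)^T *m P t *m cE c t th) + wQ w t
  - L *m invmx (Sig0 c w P t) *m L^T.

Definition RicPi_rhs (c : coef) (w : weight) (P Pi : R -> 'M[R]_n) t : 'M[R]_n :=
  let A1 := cA c t + cAb c t in
  let B1 := cB c t + cBb c t in
  let C1 := cC c t + cCb c t in
  let D1 := cD c t + cDb c t in
  let E1 := fun th => cE c t th + cEb c t th in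
  let F1 := fun th => cF c t th + cFb c t th in
  let L := (wS w t + wSb w t) + Pi t *m B1 + C1^T *m P t *m D1
           + mint (fun th => (E1 th)^T *m P t *m F1 th) in
  Pi t *m A1 + A1^T *m Pi t + C1^T *m P t *m C1
  + mint (fun th => (E1 th)^T *m P t *m E1 th) + wQ w t + wQb w t
  - L *m invmx (Sig1 c w P t) *m L^T.

Definition RicSol (T : R) (c : coef) (w : weight) (P Pi : R -> 'M[R]_n) :=
  [/\ forall t, 0 <= t <= T -> symmetric (P t) /\ symmetric (Pi t),
      {within `[0, T], continuous P} /\ {within `[0, T], continuous Pi},
      forall t, 0 <= t <= T ->
        Sig0 c w P t \in unitmx /\ Sig1 c w P t \in unitmx,
      forall t, 0 < t < T -> [/\ derivable P t 1, derivable Pi t 1,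
         'D_1 P t + RicP_rhs c w P t = 0 &
         'D_1 Pi t + RicPi_rhs c w P Pi t = 0] &
      P T = wG w /\ Pi T = wG w + wGb w].

Definition RicExists T c w := exists P Pi, RicSol T c w P Pi.

Definition RicUnique T c w := forall P1 Pi1 P2 Pi2,
  RicSol T c w P1 Pi1 -> RicSol T c w P2 Pi2 ->
  forall t, 0 <= t <= T -> P1 t = P2 t /\ Pi1 t = Pi2 t.

(* symmetric-valued, continuously differentiable on [0,T] (derivative on
   ]0,T[ extending continuously to [0,T]), bounded *)
Definition PhiC (T : R) (H : R -> 'M[R]_n) :=
  [/\ forall t, 0 <= t <= T -> symmetric (H t),
      {within `[0, T], continuous H},
      forall t, 0 < t < T -> derivable H t 1,
      exists dH : R -> 'M[R]_n, {within `[0, T], continuous dH} /\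
         forall t, 0 < t < T -> 'D_1 H t = dH t &
      bounded_on T H].

Definition WHK (T : R) (c : coef) (w : weight) (H K : R -> 'M[R]_n) : weight :=
  let QHK := fun t => wQ w t + 'D_1 H t + H t *m cA c t + (cA c t)^T *m H t
     + (cC c t)^T *m H t *m cC c t
     + mint (fun th => (cE c t th)^T *m H t *m cE c t th) in
  let SHK := fun t => wS w t + H t *m cB c t + (cC c t)^T *m H t *m cD c t
     + mint (fun th => (cE c t th)^T *m H t *m cF c t th) in
  let RHK := fun t => wR w t + (cD c t)^T *m H t *m cD c t
     + mint (fun th => (cF c t th)^T *m H t *m cF c t th) in
  let A1 := fun t => cA c t + cAb c t in
  let B1 := fun t => cB c t + cBb c t in
  let C1 := fun t => cC c t + cCb c t in
  let D1 := fun t => cD c t + cDb c t in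
  let E1 := fun t th => cE c t th + cEb c t th in
  let F1 := fun t th => cF c t th + cFb c t th in
  let QQ := fun t => wQ w t + wQb w t + 'D_1 K t + K t *m A1 t + (A1 t)^T *m K t
     + (C1 t)^T *m H t *m C1 t
     + mint (fun th => (E1 t th)^T *m H t *m E1 t th) in
  let SS := fun t => wS w t + wSb w t + K t *m B1 t + (C1 t)^T *m H t *m D1 t
     + mint (fun th => (E1 t th)^T *m H t *m F1 t th) in
  let RR := fun t => wR w t + wRb w t + (D1 t)^T *m H t *m D1 t
     + mint (fun th => (F1 t th)^T *m H t *m F1 t th) in
  let GHK := wG w - H T in
  Weight QHK (fun t => QQ t - QHK t) SHK (fun t => SS t - SHK t)
         RHK (fun t => RR t - RHK t) GHK (wG w + wGb w - K T - GHK).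

End Defs.

(* The substitution (P, Pi) |-> (P + H, Pi + K) is a bijection between the
   solutions of Ric(C, W^HK) and those of Ric(C, W).  The weights W^HK are
   built so that Sigma_0, Sigma_1 and the right-hand sides of both equations
   for W^HK at (P, Pi) are those for W at (P + H, Pi + K), up to the extra
   terms dH/dt and dK/dt, which are exactly absorbed by the derivatives of the
   shifted unknowns.  The only analytic input is that the jump integrals are
   additive in P, which holds because E, F, E + Ebar, F + Fbar are entrywise
   square integrable, so that the integrands are integrable. *)
From Pilot Require Import Defs.
From HB Require Import structures.
From mathcomp Require Import all_boot all_order all_algebra.
From mathcomp Require Import all_classical all_reals all_analysis.
From mathcomp Require Import ring lra.
Import Order.TTheory GRing.Theory Num.Theory.
Set Implicit Arguments. Unset Strict Implicit. Unset Printing Implicit Defensive.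
Import numFieldNormedType.Exports.
Local Open Scope classical_set_scope.
Local Open Scope ring_scope.

Section SquareIntegrable.
Variables (R : realType) (Th : set R) (nu : {measure set R -> \bar R}).
Hypothesis mTh : measurable Th.

Definition square_integrable (f : R -> R) :=
  measurable_fun Th f /\ nu.-integrable Th (fun x => (f x ^+ 2)%:E).

Definition mx_square_integrable p q (M : R -> 'M[R]_(p, q)) :=
  forall i j, square_integrable (fun x => M x i j).

Lemma L2nu_square_integrable T p q (r : R -> R -> 'M[R]_(p, q)) t :
  L2nu Th nu T r -> 0 <= t <= T -> mx_square_integrable (r t).
Proof. by case=> sq _ ht i j; exact: sq. Qed.

Lemma square_integrable_mul f g : square_integrable f -> square_integrable g ->
  nu.-integrable Th (EFin \o (fun x => f x * g x)).
Proof.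
move=> [mf If] [mg Ig].
apply: (le_integrable mTh _ _ (integrableD mTh If Ig)).
  by apply/measurable_realfun.measurable_EFinP;
     exact: measurable_realfun.measurable_funM.
move=> x _ /=; rewrite lee_fin normrM.
rewrite (ger0_norm (addr_ge0 (sqr_ge0 _) (sqr_ge0 _))).
rewrite -(real_normK (num_real (f x))) -(real_normK (num_real (g x))).
have := normr_ge0 (f x); have := normr_ge0 (g x).
move: `|f x| `|g x| => a b a_ge0 b_ge0; nra.
Qed.

Lemma square_integrableD f g : square_integrable f -> square_integrable g ->
  square_integrable (fun x => f x + g x).
Proof.
move=> [mf If] [mg Ig]; split; first exact: measurable_realfun.measurable_funD.
have I2fg := integrableD mTh (integrableD mTh If Ig) (integrableD mTh If Ig).
apply: (le_integrable mTh _ _ I2fg).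
  apply/measurable_realfun.measurable_EFinP;
  apply: measurable_realfun.measurable_funX; exact: measurable_realfun.measurable_funD.
move=> x _ /=; rewrite lee_fin.
rewrite !ger0_norm ?addr_ge0 ?sqr_ge0 //.
move: (f x) (g x) => a b; have := sqr_ge0 (a - b); nra.
Qed.

Lemma mx_square_integrableD p q (M N : R -> 'M[R]_(p, q)) :
  mx_square_integrable M -> mx_square_integrable N ->
  mx_square_integrable (fun x => M x + N x).
Proof.
move=> sqM sqN i j.
rewrite (_ : (fun x => _) = fun x => M x i j + N x i j); last first.
  by apply: funext => x; rewrite mxE.
exact: square_integrableD.
Qed.

Lemma integrable_trmx_mulmx p q r (M : R -> 'M[R]_(p, q)) (N : R -> 'M[R]_(p, r))
    (X : 'M[R]_p) :
  mx_square_integrable M -> mx_square_integrable N ->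
  forall i j, nu.-integrable Th (EFin \o fun x => ((M x)^T *m X *m N x) i j).
Proof.
move=> sqM sqN i j.
apply: (eq_integrable mTh
  (fun x => \sum_l \sum_k ((X k l)%:E * (M x k i * N x l j)%:E))%E).
  move=> x _ /=.
  under eq_bigr => l _ do under eq_bigr => k _ do rewrite -EFinM.
  under eq_bigr => l _ do rewrite sumEFin.
  rewrite sumEFin; congr EFin; rewrite !mxE; apply: eq_bigr => l _.
  rewrite !mxE big_distrl /=; apply: eq_bigr => k _; rewrite !mxE; ring.
apply: (integrable_sum mTh) => l _; apply: (integrable_sum mTh) => k _.
apply: (integrableZl mTh); exact: square_integrable_mul.
Qed.

Lemma mintD p q (f g : R -> 'M[R]_(p, q)) :
  (forall i j, nu.-integrable Th (EFin \o fun x => f x i j)) ->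
  (forall i j, nu.-integrable Th (EFin \o fun x => g x i j)) ->
  mint Th nu (fun x => f x + g x) = mint Th nu f + mint Th nu g.
Proof.
move=> If Ig; apply/matrixP => i j; rewrite !mxE.
rewrite (eq_Rintegral _ (g := fun x => f x i j + g x i j)); last first.
  by move=> x _; rewrite mxE.
exact: RintegralD.
Qed.

Lemma mint_mulmxDr p q r (M : R -> 'M[R]_(p, q)) (N : R -> 'M[R]_(p, r))
    (X Y : 'M[R]_p) :
  mx_square_integrable M -> mx_square_integrable N ->
  mint Th nu (fun x => (M x)^T *m (X + Y) *m N x) =
  mint Th nu (fun x => (M x)^T *m X *m N x)
  + mint Th nu (fun x => (M x)^T *m Y *m N x).
Proof.
move=> sqM sqN; rewrite -mintD; try exact: integrable_trmx_mulmx.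
by congr mint; apply: funext => x; rewrite mulmxDr mulmxDl.
Qed.

End SquareIntegrable.

Lemma symmetricD (R : realType) k (A B : 'M[R]_k) :
  Defs.symmetric A -> Defs.symmetric B -> Defs.symmetric (A + B).
Proof. by rewrite /Defs.symmetric linearD /= => -> ->. Qed.

Lemma symmetricB (R : realType) k (A B : 'M[R]_k) :
  Defs.symmetric A -> Defs.symmetric B -> Defs.symmetric (A - B).
Proof. by rewrite /Defs.symmetric linearB /= => -> ->. Qed.

Lemma subr_quadform_shift (R : pzRingType) p q (A A' d : 'M[R]_p)
    (L L' : 'M[R]_(p, q)) (X : 'M[R]_q) :
  A = A' + d -> L = L' -> A - L *m X *m L^T = A' - L' *m X *m L'^T + d.
Proof. by move=> -> ->; rewrite addrAC. Qed.

Section RiccatiShift.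
Variables (R : realType) (n m : nat) (Th : set R) (nu : {measure set R -> \bar R}).
Variables (T : R) (c : coef R n m) (w : weight R n m) (H K : R -> 'M[R]_n).
Hypothesis mTh : measurable Th.
Hypothesis cok : coef_ok Th nu T c.

Local Notation wHK := (WHK Th nu T c w H K).

Section AtTime.
Variable t : R.
Hypothesis ht : 0 <= t <= T.

Let sqE : mx_square_integrable Th nu (cE c t).
Proof. by case: cok => _ _ _ _ [sq _ _ _]; exact: L2nu_square_integrable sq ht. Qed.

Let sqF : mx_square_integrable Th nu (cF c t).
Proof. by case: cok => _ _ _ _ [_ _ sq _]; exact: L2nu_square_integrable sq ht. Qed.

Let sqE1 : mx_square_integrable Th nu (fun x => cE c t x + cEb c t x).
Proof.
case: cok => _ _ _ _ [_ sq _ _].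
exact/mx_square_integrableD/(L2nu_square_integrable sq ht).
Qed.

Let sqF1 : mx_square_integrable Th nu (fun x => cF c t x + cFb c t x).
Proof.
case: cok => _ _ _ _ [_ _ _ sq].
exact/mx_square_integrableD/(L2nu_square_integrable sq ht).
Qed.

Lemma Sig0_WHK P : Sig0 Th nu c wHK P t = Sig0 Th nu c w (fun s => P s + H s) t.
Proof.
rewrite /Sig0 /= (mint_mulmxDr mTh (P t) (H t) sqF sqF) mulmxDr mulmxDl.
by rewrite [RHS](AC ((1*2)*2) (1*3*5*2*4)).
Qed.

Lemma Sig1_WHK P : Sig1 Th nu c wHK P t = Sig1 Th nu c w (fun s => P s + H s) t.
Proof.
rewrite /Sig1 /= (mint_mulmxDr mTh (P t) (H t) sqF1 sqF1) subrKC.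
rewrite (mulmxDr (cD c t + cDb c t)^T (P t) (H t)) mulmxDl.
by rewrite [RHS](AC ((1*2)*2) (1*3*5*2*4)).
Qed.

Lemma RicP_rhs_WHK P : RicP_rhs Th nu c wHK P t =
  RicP_rhs Th nu c w (fun s => P s + H s) t + 'D_1 H t.
Proof.
rewrite /RicP_rhs Sig0_WHK /=; apply: subr_quadform_shift.
  rewrite (mint_mulmxDr mTh (P t) (H t) sqE sqE) (mulmxDl (P t) (H t) (cA c t)).
  rewrite (mulmxDr (cA c t)^T (P t) (H t)) (mulmxDr (cC c t)^T (P t) (H t)).
  rewrite (mulmxDl ((cC c t)^T *m P t)).
  by rewrite [LHS](AC (4*6) ((((((1*7)*(2*8))*(3*9))*(4*10))*5)*6)).
rewrite (mint_mulmxDr mTh (P t) (H t) sqE sqF) (mulmxDl (P t) (H t) (cB c t)).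
rewrite (mulmxDr (cC c t)^T (P t) (H t)) (mulmxDl ((cC c t)^T *m P t)).
by rewrite [LHS](AC 7 (((1*(5*2))*(6*3))*(7*4))).
Qed.

Lemma RicPi_rhs_WHK P Pi : RicPi_rhs Th nu c wHK P Pi t =
  RicPi_rhs Th nu c w (fun s => P s + H s) (fun s => Pi s + K s) t + 'D_1 K t.
Proof.
rewrite /RicPi_rhs Sig1_WHK /=; apply: subr_quadform_shift.
  rewrite -[LHS]addrA subrKC.
  rewrite (mint_mulmxDr mTh (P t) (H t) sqE1 sqE1).
  rewrite (mulmxDl (Pi t) (K t) (cA c t + cAb c t)).
  rewrite (mulmxDr (cA c t + cAb c t)^T (Pi t) (K t)).
  rewrite (mulmxDr (cC c t + cCb c t)^T (P t) (H t)).
  rewrite (mulmxDl ((cC c t + cCb c t)^T *m P t)).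
  by rewrite [LHS](AC (4*7) (((((((1*8)*(2*9))*(3*10))*(4*11))*5)*6)*7)).
rewrite subrKC (mint_mulmxDr mTh (P t) (H t) sqE1 sqF1).
rewrite (mulmxDl (Pi t) (K t) (cB c t + cBb c t)).
rewrite (mulmxDr (cC c t + cCb c t)^T (P t) (H t)).
rewrite (mulmxDl ((cC c t + cCb c t)^T *m P t)).
by rewrite [LHS](AC 8 ((((1*2)*(6*3))*(7*4))*(8*5))).
Qed.

End AtTime.

Hypotheses (PH : PhiC T H) (PK : PhiC T K).

Lemma RicP_residual_WHK P P' t : P' =1 (fun s => P s + H s) ->
  0 < t < T -> derivable P t 1 ->
  'D_1 P t + RicP_rhs Th nu c wHK P t = 'D_1 P' t + RicP_rhs Th nu c w P' t.
Proof.
move=> /funext -> ht dP; have [_ _ dH _ _] := PH.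
rewrite RicP_rhs_WHK; last by case/andP: ht => /ltW -> /ltW ->.
by rewrite (deriveD dP (dH t ht)) addrA addrAC.
Qed.

Lemma RicPi_residual_WHK P Pi P' Pi' t : P' =1 (fun s => P s + H s) ->
  Pi' =1 (fun s => Pi s + K s) -> 0 < t < T -> derivable Pi t 1 ->
  'D_1 Pi t + RicPi_rhs Th nu c wHK P Pi t =
  'D_1 Pi' t + RicPi_rhs Th nu c w P' Pi' t.
Proof.
move=> /funext -> /funext -> ht dPi; have [_ _ dK _ _] := PK.
rewrite RicPi_rhs_WHK; last by case/andP: ht => /ltW -> /ltW ->.
by rewrite (deriveD dPi (dK t ht)) addrA addrAC.
Qed.

Lemma RicSol_WHK_shift P Pi : RicSol Th nu T c wHK P Pi ->
  RicSol Th nu T c w (fun s => P s + H s) (fun s => Pi s + K s).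
Proof.
have [sH cH dH _ _] := PH; have [sK cK dK _ _] := PK.
case=> sym [cP cPi] unit der [PT PiT]; split.
- by move=> t ht; have [sP sPi] := sym t ht; split; apply: symmetricD; auto.
- by split; apply: within_continuousD.
- by move=> t ht; rewrite -Sig0_WHK -?Sig1_WHK //; exact: unit.
- move=> t ht; have [dP dPi eP ePi] := der t ht; split.
  + exact: derivableD dP (dH t ht).
  + exact: derivableD dPi (dK t ht).
  + by rewrite -(RicP_residual_WHK (frefl _) ht dP).
  + by rewrite -(RicPi_residual_WHK (frefl _) (frefl _) ht dPi).
- by rewrite PT PiT /= subrKC !subrK.
Qed.

Lemma RicSol_WHK_unshift P Pi : RicSol Th nu T c w P Pi ->
  RicSol Th nu T c wHK (fun s => P s - H s) (fun s => Pi s - K s).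
Proof.
have [sH cH dH _ _] := PH; have [sK cK dK _ _] := PK.
have PE : P =1 (fun s => P s - H s + H s) by move=> s; rewrite subrK.
have PiE : Pi =1 (fun s => Pi s - K s + K s) by move=> s; rewrite subrK.
case=> sym [cP cPi] unit der [PT PiT]; split.
- by move=> t ht; have [sP sPi] := sym t ht; split; apply: symmetricB; auto.
- by split; apply: within_continuousB.
- by move=> t ht; rewrite Sig0_WHK ?Sig1_WHK // -(funext PE); exact: unit.
- move=> t ht; have [dP dPi eP ePi] := der t ht.
  have dPH := derivableB dP (dH t ht); have dPiK := derivableB dPi (dK t ht).
  split; [exact: dPH | exact: dPiK | |].
  + by rewrite (RicP_residual_WHK PE ht dPH).
  + by rewrite (RicPi_residual_WHK PE PiE ht dPiK).
- by rewrite PT PiT /= subrKC.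
Qed.

End RiccatiShift.

Theorem lemma4p2 (R : realType) (T : R) (n m : nat)
  (Th : set R) (nu : {measure set R -> \bar R})
  (c : coef R n m) (w : weight R n m) (H K : R -> 'M[R]_n) :
  0 < T -> (0 < n)%N -> (0 < m)%N ->
  measurable Th -> Th !=set0 -> Th `<=` [set x | x != 0] ->
  sigma_finite Th nu ->
  (\int[nu]_(x in Th) (Num.min 1 (x ^+ 2))%:E < +oo)%E ->
  coef_ok Th nu T c -> weight_ok T w ->
  PhiC T H -> PhiC T K ->
  (RicExists Th nu T c (WHK Th nu T c w H K) <-> RicExists Th nu T c w) /\
  (RicUnique Th nu T c (WHK Th nu T c w H K) <-> RicUnique Th nu T c w).
Proof.
move=> _ _ _ mTh _ _ _ _ cok _ PH PK.
have shift := RicSol_WHK_shift mTh cok PH PK.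
have unshift := RicSol_WHK_unshift mTh cok PH PK.
split; split.
- by case=> P [Pi /shift sol]; do 2 eexists; exact: sol.
- by case=> P [Pi /unshift sol]; do 2 eexists; exact: sol.
- move=> uniq P1 Pi1 P2 Pi2 /unshift sol1 /unshift sol2 t ht.
  have [eP ePi] := uniq _ _ _ _ sol1 sol2 t ht.
  by split; [apply: (addIr (- H t)) | apply: (addIr (- K t))].
- move=> uniq P1 Pi1 P2 Pi2 /shift sol1 /shift sol2 t ht.
  have [eP ePi] := uniq _ _ _ _ sol1 sol2 t ht.
  by split; [apply: (addIr (H t)) | apply: (addIr (K t))].
Qed.
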